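(* Let $S_{\mathrm{even}}$ (resp. $S_{\mathrm{odd}}$) be the set of the 24 consonant triads whose root is even (resp. odd). The functions $L$ and $R$ map $S_{\mathrm{even}}$ to itself and $S_{\mathrm{odd}}$ to itself, and the group of permutations of $S_{\mathrm{even}}$ generated by the restrictions of $L$ and $R$ is isomorphic to the dihedral group $D_{12}$ of order 24; likewise the group of permutations of $S_{\mathrm{odd}}$ generated by the restrictions of $L$ and $R$ is isomorphic to $D_{12}$.
   Context: Pitch classes are elements of $\mathbb{Z}_{24}$ (even residues: original tones; odd residues: new tones). For $n\in\mathbb{Z}_{24}$, $I_n(y)=-y+n\pmod{24}$, applied componentwise to ordered triples. Consonant triads are written as ordered triples: the major triad with root $x$ is $\langle x,x+8,x+14\rangle$ and the minor triad with root $x$ is $\langle x+14,x+6,x\rangle$ (underlying sets $\{x,x+8,x+14\}$ and $\{x,x+6,x+14\}$); there are 48 consonant triads. Define $L\langle y_1,y_2,y_3\rangle=I_{y_2+y_3}\langle y_1,y_2,y_3\rangle$ and $R\langle y_1,y_2,y_3\rangle=I_{y_1+y_2}\langle y_1,y_2,y_3\rangle$, which send consonant triads to consonant triads. $D_{12}$ denotes the group $\langle x,y\mid x^{12}=y^2=1,\ yxy=x^{-1}\rangle$ of order 24. *)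

From HB Require Import structures.
From mathcomp Require Import all_boot all_order all_algebra all_fingroup.
Set Implicit Arguments. Unset Strict Implicit. Unset Printing Implicit Defensive.
Import GRing.Theory.
Local Open Scope ring_scope.

Definition pc := 'Z_24.
Definition triad := (pc * pc * pc)%type.

Definition Ipc (n y : pc) : pc := - y + n.
Definition Itr (n : pc) (t : triad) : triad :=
  (Ipc n t.1.1, Ipc n t.1.2, Ipc n t.2).

Definition major (x : pc) : triad := (x, x + 8, x + 14).
Definition minor (x : pc) : triad := (x + 14, x + 6, x).

Definition Lop (t : triad) : triad := Itr (t.1.2 + t.2) t.
Definition Rop (t : triad) : triad := Itr (t.1.1 + t.1.2) t.

(* consonant triads with even / odd root (root parity read on the
   representative in {0,...,23}). *)
Definition S_even : {set triad} :=
  [set t | [exists x : pc, ~~ odd (nat_of_ord x) && ((t == major x) || (t == minor x))]].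
Definition S_odd : {set triad} :=
  [set t | [exists x : pc, odd (nat_of_ord x) && ((t == major x) || (t == minor x))]].

Definition SevenT := {t : triad | t \in S_even}.
Definition SoddT := {t : triad | t \in S_odd}.

(* L and R are involutions that move the root of a consonant triad by an even
   amount (L: major x <-> minor (x + 8), R: major x <-> minor (x - 6)), so they
   preserve the parity of the root.  Their product R o L translates major roots
   by 14 and minor roots by -14, an element of order 12 in Z_24.  Two
   involutions whose product has order q > 2 generate a group of order 2q, the
   cyclic case being excluded because the group is not abelian; such a group is
   dihedral. *)

From HB Require Import structures.
From mathcomp Require Import all_boot all_order all_algebra all_fingroup.
From mathcomp Require Import all_solvable ring.
Set Implicit Arguments. Unset Strict Implicit. Unset Printing Implicit Defensive.
Import GRing.Theory.

Section Involutions.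
Local Open Scope group_scope.

Lemma order_by_prime_divisors (gT : finGroupType) (x : gT) n :
  0 < n -> x ^+ n = 1 -> {in primes n, forall r, x ^+ (n %/ r) != 1} -> #[x] = n.
Proof.
move=> n_gt0 xn1 x_nr; have /dvdnP[k def_n] : #[x] %| n by rewrite order_dvdn xn1.
have [k1 | k_neq1] := eqVneq k 1%N; first by rewrite def_n k1 mul1n.
have k_gt1 : (1 < k)%N.
  rewrite ltn_neqAle eq_sym k_neq1 lt0n.
  by apply: contraTneq n_gt0 => k0; rewrite def_n k0.
have r_n : pdiv k \in primes n.
  by rewrite mem_primes pdiv_prime // n_gt0 def_n dvdn_mulr // pdiv_dvd.
case/negP: (x_nr _ r_n); rewrite -order_dvdn def_n -divn_mulAC ?pdiv_dvd //.
exact: dvdn_mull.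
Qed.

Lemma card_involutions_gen (gT : finGroupType) (x y : gT) :
  #[x] = 2 -> #[y] = 2 -> 2 < #[x * y] -> #|<<[set x; y]>>| = (#[x * y]).*2.
Proof.
set G := <<[set x; y]>>; set q := #[x * y] => ox oy q_gt2.
have Gx : x \in G by rewrite mem_gen ?set21.
have Gy : y \in G by rewrite mem_gen ?set22.
have homG : G \homg 'D_q.*2.
  rewrite Grp'_dihedral ?(ltnW q_gt2) //; apply/existsP; exists (x, y).
  by rewrite /= !xpair_eqE joing_idl joing_idr -{1}ox -oy !expg_order !eqxx.
have /dvdnP[k oG] : q %| #|G| by rewrite order_dvdG // groupM.
have : #|G| %| q.*2 by rewrite -card_dihedral ?card_homg // ltnW.
rewrite oG -mul2n dvdn_pmul2r ?order_gt0 // => /(primeP (isT : prime 2)).2.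
case/orP=> /eqP k_eq; last by rewrite k_eq mul2n.
have cycG : <[x * y]> = G.
  by apply/eqP; rewrite eqEcard cycle_subG groupM //= oG k_eq mul1n leqnn.
have cxy : commute x y by apply: (centsP (cycle_abelian (x * y))); rewrite cycG.
have : q %| 2 by rewrite order_dvdn expgMn // -{1}ox -oy !expg_order mulg1.
by move/dvdn_leq => /(_ isT); rewrite leqNgt q_gt2.
Qed.

Lemma involutions_gen_Grp_dihedral (gT : finGroupType) (x y : gT) q :
  #[x] = 2 -> #[y] = 2 -> #[x * y] = q -> 2 < q ->
  <<[set x; y]>> \isog Grp (x : y : (x ^+ q, y ^+ 2, x ^ y = x^-1)).
Proof.
move=> ox oy oxy q_gt2; have ne_xy : x != y.
  apply: contraTneq q_gt2 => eq_xy.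
  by rewrite -oxy eq_xy (_ : y * y = 1) ?order1 // -(expgS y 1) -oy expg_order.
have := involutions_gen_dihedral ox oy ne_xy.
rewrite card_involutions_gen ?oxy // => isoD.
exact: isoGrp_trans isoD (Grp_dihedral (ltnW q_gt2)).
Qed.

End Involutions.

Section SubInvolution.
Local Open Scope group_scope.

Variables (T : finType) (S : {set T}) (f : T -> T).
Hypotheses (fK : involutive f) (fS : {homo f : t / t \in S}).

Definition sub_involution (s : {t | t \in S}) : {t | t \in S} :=
  let: exist t St := s in exist _ (f t) (fS St).

Lemma sub_involutionK : involutive sub_involution.
Proof. by case=> t St; apply: val_inj; exact: fK. Qed.

Definition sub_perm : {perm {t | t \in S}} := perm (inv_inj sub_involutionK).

Lemma sub_permE s : val (sub_perm s) = f (val s).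
Proof. by case: s => t St; rewrite permE. Qed.

Lemma order_sub_perm : (exists s : {t | t \in S}, f (val s) != val s) -> #[sub_perm] = 2.
Proof.
case=> s moved; apply: order_by_prime_divisors => //.
  by apply/permP => t; apply: val_inj; rewrite expgS expg1 permM !sub_permE fK perm1.
move=> r; rewrite (_ : primes 2 = [:: 2]) // inE => /eqP -> /=; rewrite expg1.
by apply: contra moved => /eqP/permP/(_ s)/(congr1 val); rewrite sub_permE perm1 => ->.
Qed.

End SubInvolution.

Lemma odd_Zp_add n (x y : 'I_n.+1) : ~~ odd n.+1 -> odd (x + y)%R = odd x (+) odd y.
Proof. by move/negbTE=> ev; rewrite /= odd_mod // oddD. Qed.

Lemma odd_Zp_opp n (x : 'I_n.+1) : ~~ odd n.+1 -> odd (- x)%R = odd x.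
Proof. by move/negbTE=> ev; rewrite /= odd_mod // oddB ?ev // ltnW. Qed.

Lemma odd_Zp_sub n (x y : 'I_n.+1) : ~~ odd n.+1 -> odd (x - y)%R = odd x (+) odd y.
Proof. by move=> ev; rewrite odd_Zp_add // odd_Zp_opp. Qed.

Section Triads.
Local Open Scope ring_scope.

Lemma Lop_involutive : involutive Lop.
Proof. by case=> [[a b] c]; rewrite /Lop /Itr /Ipc /=; congr (_, _, _); ring. Qed.

Lemma Rop_involutive : involutive Rop.
Proof. by case=> [[a b] c]; rewrite /Rop /Itr /Ipc /=; congr (_, _, _); ring. Qed.

Lemma Lop_major x : Lop (major x) = minor (x + 8).
Proof. by rewrite /Lop /Itr /Ipc /=; congr (_, _, _); ring. Qed.
Lemma Lop_minor x : Lop (minor x) = major (x - 8).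
Proof. by rewrite /Lop /Itr /Ipc /=; congr (_, _, _); ring. Qed.
Lemma Rop_major x : Rop (major x) = minor (x - 6).
Proof. by rewrite /Rop /Itr /Ipc /=; congr (_, _, _); ring. Qed.
Lemma Rop_minor x : Rop (minor x) = major (x + 6).
Proof. by rewrite /Rop /Itr /Ipc /=; congr (_, _, _); ring. Qed.

Lemma iter_RL_major k x : iter k (Rop \o Lop) (major x) = major (x + 14 *+ k).
Proof.
elim: k => [|k IHk]; first by rewrite addr0.
by rewrite iterS IHk /= Lop_major Rop_minor mulrS; congr major; ring.
Qed.

Lemma iter_RL_minor k x : iter k (Rop \o Lop) (minor x) = minor (x - 14 *+ k).
Proof.
elim: k => [|k IHk]; first by rewrite subr0.
by rewrite iterS IHk /= Lop_minor Rop_major mulrS; congr minor; ring.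
Qed.

Lemma major_inj : injective major.
Proof. by move=> x y [->]. Qed.

Lemma major_neq_minor x y : major x != minor y.
Proof.
apply/eqP => /(congr1 (fun t : triad => t.2 - t.1.1)) /=.
have -> : x + 14 - x = 14 by ring.
have -> : y - (y + 14) = - (14 : pc) by ring.
by move/eqP.
Qed.

Definition consonant (t : triad) : Prop := exists x, t = major x \/ t = minor x.

Lemma iter_RL_consonant t : consonant t -> iter 12 (Rop \o Lop) t = t.
Proof.
have cycle12 : 14 *+ 12 = 0 :> pc by apply/eqP.
by case=> x [->|->]; rewrite (iter_RL_major, iter_RL_minor) cycle12 (addr0, subr0).
Qed.

Lemma iter_RL_major_eq k x :
  (iter k (Rop \o Lop) (major x) == major x) = (14 *+ k == 0 :> pc).
Proof. by rewrite iter_RL_major (inj_eq major_inj) -{2}[x]addr0 (inj_eq (addrI x)). Qed.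

Definition S_parity (b : bool) : {set triad} :=
  [set t | [exists x : pc, (odd x == b) && ((t == major x) || (t == minor x))]].

Lemma S_parityP b t :
  reflect (exists2 x : pc, odd x = b & t = major x \/ t = minor x) (t \in S_parity b).
Proof.
rewrite inE; apply: (iffP existsP) => [[x /andP[/eqP odd_x /orP t_x]] | [x odd_x t_x]].
  by exists x => //; case: t_x => /eqP; [left | right].
by exists x; rewrite odd_x eqxx; case: t_x => ->; rewrite eqxx ?orbT.
Qed.

Lemma S_parity_consonant b t : t \in S_parity b -> consonant t.
Proof. by case/S_parityP=> x _; exists x. Qed.

Lemma S_parity_Lop b : {homo Lop : t / t \in S_parity b}.
Proof.
move=> t /S_parityP[x <- [->|->]]; apply/S_parityP.
  by exists (x + 8); [rewrite odd_Zp_add ?addbF | right; rewrite Lop_major].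
by exists (x - 8); [rewrite odd_Zp_sub ?addbF | left; rewrite Lop_minor].
Qed.

Lemma S_parity_Rop b : {homo Rop : t / t \in S_parity b}.
Proof.
move=> t /S_parityP[x <- [->|->]]; apply/S_parityP.
  by exists (x - 6); [rewrite odd_Zp_sub ?addbF | right; rewrite Rop_major].
by exists (x + 6); [rewrite odd_Zp_add ?addbF | left; rewrite Rop_minor].
Qed.

Lemma S_evenE : S_even = S_parity false.
Proof. by apply/setP => t; rewrite !inE; apply: eq_existsb => x; case: odd. Qed.

Lemma S_oddE : S_odd = S_parity true.
Proof. by apply/setP => t; rewrite !inE; apply: eq_existsb => x; case: odd. Qed.

End Triads.

Section LRGroup.
Local Open Scope group_scope.

Variable S : {set triad}.
Hypotheses (LS : {homo Lop : t / t \in S}) (RS : {homo Rop : t / t \in S}).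
Hypothesis S_consonant : forall t, t \in S -> consonant t.
Variable x0 : pc.
Hypothesis S_major_x0 : major x0 \in S.

Lemma LR_perm_group_dihedral :
  exists pL pR : {perm {t | t \in S}},
    (forall s, val (pL s) = Lop (val s)) /\ (forall s, val (pR s) = Rop (val s)) /\
    <<[set pL; pR]>> \isog Grp (x : y : (x ^+ 12, y ^+ 2, x ^ y = x^-1)).
Proof.
pose pL := sub_perm Lop_involutive LS; pose pR := sub_perm Rop_involutive RS.
exists pL, pR; split; first exact: sub_permE; split; first exact: sub_permE.
pose s0 : {t | t \in S} := exist _ (major x0) S_major_x0.
have RL_pow k s : val (((pL * pR) ^+ k) s) = iter k (Rop \o Lop) (val s).
  by rewrite permX; elim: k => [|k IHk] //; rewrite !iterS permM !sub_permE IHk.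
have RL_pow_neq1 k : (14 *+ k != 0 :> pc)%R -> (pL * pR) ^+ k != 1.
  move=> nz; apply: contra nz => /eqP/permP/(_ s0)/(congr1 val)/eqP.
  by rewrite RL_pow perm1 [val s0]/= iter_RL_major_eq.
apply: involutions_gen_Grp_dihedral => //.
- apply: order_sub_perm; exists s0.
  by rewrite [val s0]/= Lop_major eq_sym major_neq_minor.
- apply: order_sub_perm; exists s0.
  by rewrite [val s0]/= Rop_major eq_sym major_neq_minor.
apply: order_by_prime_divisors => //.
  apply/permP => s; apply: val_inj.
  rewrite RL_pow perm1 iter_RL_consonant //; exact: S_consonant (valP s).
move=> r; rewrite (_ : primes 12 = [:: 2; 3]) // !inE.
by case/orP=> /eqP ->; apply: RL_pow_neq1.
Qed.

End LRGroup.

Local Open Scope group_scope.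

Theorem mainTheorem7 :
  ((forall t, t \in S_even -> Lop t \in S_even) /\
   (forall t, t \in S_even -> Rop t \in S_even) /\
   (forall t, t \in S_odd -> Lop t \in S_odd) /\
   (forall t, t \in S_odd -> Rop t \in S_odd)) /\
  (exists pL pR : {perm SevenT},
     (forall s, val (pL s) = Lop (val s)) /\
     (forall s, val (pR s) = Rop (val s)) /\
     (<<[set pL; pR]>> \isog Grp (x : y : (x ^+ 12, y ^+ 2, x ^ y = x^-1)))) /\
  (exists pL pR : {perm SoddT},
     (forall s, val (pL s) = Lop (val s)) /\
     (forall s, val (pR s) = Rop (val s)) /\
     (<<[set pL; pR]>> \isog Grp (x : y : (x ^+ 12, y ^+ 2, x ^ y = x^-1)))).
Proof.
have [LSe RSe] : {homo Lop : t / t \in S_even} /\ {homo Rop : t / t \in S_even}.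
  by rewrite S_evenE; split; [apply: S_parity_Lop | apply: S_parity_Rop].
have [LSo RSo] : {homo Lop : t / t \in S_odd} /\ {homo Rop : t / t \in S_odd}.
  by rewrite S_oddE; split; [apply: S_parity_Lop | apply: S_parity_Rop].
have Se_cons t : t \in S_even -> consonant t by rewrite S_evenE; apply: S_parity_consonant.
have So_cons t : t \in S_odd -> consonant t by rewrite S_oddE; apply: S_parity_consonant.
have Se0 : major 0%R \in S_even.
  by rewrite S_evenE; apply/S_parityP; exists 0%R => //; left.
have So1 : major 1%R \in S_odd.
  by rewrite S_oddE; apply/S_parityP; exists 1%R => //; left.
split; first by [].
split; first exact (LR_perm_group_dihedral LSe RSe Se_cons Se0).
exact (LR_perm_group_dihedral LSo RSo So_cons So1).
Qed.
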